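(* Let $W$ be a BISO channel with $\eta=\eta_{KL}(W)$ and capacity $C(W)$. Then $$C_s\big(\mathrm{BEC}(1-\eta),W\big)=\eta-C(W),\qquad C_s\Big(W,\mathrm{BSC}\big(\tfrac{1-\sqrt\eta}{2}\big)\Big)=C(W)-1+h_2\Big(\tfrac{1-\sqrt\eta}{2}\Big).$$
   Context: A binary-input symmetric-output (BISO) channel is a channel $P_{Y|X}$ with input alphabet $\{0,1\}$ and finite output alphabet $\mathcal Y=\{0,\pm1,\dots,\pm l\}$ for some integer $l\ge 1$ (some transition probabilities may be zero), such that $P_{Y|X}(y|0)=P_{Y|X}(-y|1)$ for all $y$. $\mathrm{BSC}(p)$: binary symmetric channel with crossover probability $p$; $\mathrm{BEC}(\varepsilon)$: binary erasure channel with erasure probability $\varepsilon$. All logarithms are base 2; $h_2(p)=-p\log_2p-(1-p)\log_2(1-p)$. Capacity $C(P)=\sup_{P_X}I(X:Y)$. $\eta_{KL}(P)=\sup_{P_X,Q_X}\frac{D(P\circ P_X\|P\circ Q_X)}{D(P_X\|Q_X)}$ (over inputs with $0<D(P_X\|Q_X)<\infty$). For a wiretap setting with main channel $A=P_{Y|X}$ and eavesdropper channel $B=P_{Z|X}$ (same binary input), the secrecy capacity is $C_s(A,B)=\max_{P_X}\big(I(X:Y)-I(X:Z)\big)$. *)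

From HB Require Import structures.
From mathcomp Require Import all_boot all_order all_algebra.
From mathcomp Require Import all_classical all_reals all_analysis.
Set Implicit Arguments. Unset Strict Implicit. Unset Printing Implicit Defensive.
Import Order.TTheory GRing.Theory Num.Theory.
Local Open Scope classical_set_scope.
Local Open Scope ring_scope.

Section Info.
Variable R : realType.

Definition log2 (x : R) : R := ln x / ln 2.

Definition plogq (a b : R) : R := if a == 0 then 0 else a * log2 (a / b).

Definition is_distr (T : finType) (P : T -> R) : Prop :=
  (forall t, 0 <= P t) /\ \sum_(t : T) P t = 1.

Definition is_channel (Y : finType) (W : bool -> Y -> R) : Prop :=
  forall x, is_distr (W x).

(* KL divergence (real-valued; used only when supp P ⊆ supp Q) *)
Definition KL (T : finType) (P Q : T -> R) : R := \sum_(t : T) plogq (P t) (Q t).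

(* absolute continuity P << Q, i.e. D(P||Q) < oo *)
Definition abs_cont (T : finType) (P Q : T -> R) : Prop :=
  forall t, Q t = 0 -> P t = 0.

Definition outd (Y : finType) (W : bool -> Y -> R) (P : bool -> R) : Y -> R :=
  fun y => \sum_(x : bool) P x * W x y.

Definition MI (Y : finType) (P : bool -> R) (W : bool -> Y -> R) : R :=
  \sum_(x : bool) \sum_(y : Y) plogq (P x * W x y) (P x * outd W P y).

Definition capacity (Y : finType) (W : bool -> Y -> R) : R :=
  sup [set MI P W | P in [set P : bool -> R | is_distr P]].

Definition etaKL (Y : finType) (W : bool -> Y -> R) : R :=
  sup [set r : R | exists P Q : bool -> R,
        [/\ is_distr P, is_distr Q, abs_cont P Q, 0 < KL P Q &
            r = KL (outd W P) (outd W Q) / KL P Q]].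

Definition secrecy_capacity (Y Z : finType) (A : bool -> Y -> R) (B : bool -> Z -> R) : R :=
  sup [set MI P A - MI P B | P in [set P : bool -> R | is_distr P]].

Definition h2 (p : R) : R := - (plogq p 1) - plogq (1 - p) 1.

(* BISO channel: output alphabet {-l..l} encoded as 'I_(2l+1), index i <-> y = i - l;
   rev_ord i encodes -y. *)
Definition is_BISO (l : nat) (W : bool -> 'I_(2 * l + 1) -> R) : Prop :=
  is_channel W /\ forall y, W false y = W true (rev_ord y).

Definition BSC (p : R) : bool -> bool -> R :=
  fun x y => if x == y then 1 - p else p.

(* BEC(e): output option bool, None = erasure *)
Definition BEC (e : R) : bool -> option bool -> R :=
  fun x y => match y with None => e | Some b => if b == x then 1 - e else 0 end.

End Info.

(* In both wiretap pairs the two channels have mirror-symmetric rows, and for such a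
   channel V, I(P; V) = I(U; V) - D(P o V || U o V) with U uniform.  Hence each
   secrecy capacity is attained at U once the eavesdropper's divergence D(P o B || U o B)
   never exceeds the legitimate receiver's.  For BEC(1 - eta) that divergence is
   eta * d(p || 1/2), which dominates W's by the very definition of eta.
   A BISO channel is a mixture of BSCs with weights w_y and correlations c_y, so up to
   the factor 2 ln 2 its divergence is sum_y w_y phi(c_y (2p - 1)), with
   phi(x) = (1 + x) ln (1 + x) + (1 - x) ln (1 - x), whereas BSC((1 - s) / 2) gives
   phi(s (2p - 1)).  The contraction of d(. || .) by c^2 through each BSC yields
   eta <= sum_y w_y c_y^2, and phi(sqrt u) is convex and increasing in u, which settles
   s = sqrt eta. *)

From mathcomp Require Import all_boot all_order all_algebra.
From mathcomp Require Import all_classical all_reals all_analysis.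
From mathcomp Require Import ring lra.
Import Order.TTheory GRing.Theory Num.Theory numFieldNormedType.Exports.
Set Implicit Arguments. Unset Strict Implicit. Unset Printing Implicit Defensive.
Local Open Scope classical_set_scope.
Local Open Scope ring_scope.

Section RealAnalysis.
Variable R : realType.
Implicit Types (a b c x y z : R) (f g df dg : R -> R).

Lemma ln2_gt0 : 0 < ln (2 : R).
Proof. by apply: ln_gt0; rewrite ltr1n. Qed.

Lemma ln2_neq0 : ln (2 : R) != 0.
Proof. exact: lt0r_neq0 ln2_gt0. Qed.

Lemma norm_xlnx_le y : 0 < y -> y <= 1 -> `|y * ln y| <= 2 * Num.sqrt y.
Proof.
move=> y0 y1.
have sy0 : 0 < Num.sqrt y by rewrite sqrtr_gt0.
have ysq : y = Num.sqrt y * Num.sqrt y by rewrite -expr2 sqr_sqrtr // ltW.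
have lny : ln y = 2 * ln (Num.sqrt y) by rewrite {1}ysq lnM ?posrE //; lra.
rewrite ler0_norm; last by rewrite mulr_ge0_le0 ?ln_le0 // ltW.
have lnsqrt : - ln (Num.sqrt y) <= (Num.sqrt y)^-1.
  by rewrite -lnV ?posrE //; apply/ltW/ln_sublinear; rewrite invr_gt0.
rewrite lny -mulrN -mulrN mulrCA ler_pM2l //.
apply: le_trans (ler_wpM2l (ltW y0) lnsqrt) _.
by rewrite {1}ysq mulrK // unitfE gt_eqF.
Qed.

(* [ln] is [0] on nonpositive reals, so [x * ln x] vanishes there. *)
Lemma continuous_xlnx : continuous (fun x : R => x * ln x).
Proof.
move=> x; case: (ltgtP x 0) => [x0|x0|->].
- apply/cvgrPdist_lt => e e0; near=> y.
  have y0 : y < 0 by near: y; exact: lt_nbhsl.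
  by rewrite !ln0 ?ltW // !mulr0 subrr normr0.
- by apply: continuousM; [exact: cvg_id | exact: continuous_ln].
- apply/cvgrPdist_lt => e e0; near=> y.
  rewrite ln0 // mulr0 sub0r normrN.
  case: (leP y 0) => y0; first by rewrite ln0 // mulr0 normr0.
  have : y < Num.min 1 ((e / 2) ^+ 2).
    by near: y; apply: lt_nbhsl; rewrite lt_min ltr01 exprn_gt0 // divr_gt0.
  rewrite lt_min => /andP[y1 ye].
  apply: le_lt_trans (norm_xlnx_le y0 (ltW y1)) _.
  rewrite -ltr_pdivlMl // mulrC.
  have : Num.sqrt y < Num.sqrt ((e / 2) ^+ 2).
    by rewrite ltr_sqrt // exprn_gt0 // divr_gt0.
  by rewrite sqrtr_sqr ger0_norm ?divr_ge0 ?ltW // mulrC.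
Unshelve. all: by end_near.
Qed.

(* Pointwise forms of the library lemmas, which are stated for [f + g], [f * g], ...
   and do not unify with a [fun] under [apply:]. *)
Lemma continuousD_fun f g x : {for x, continuous f} -> {for x, continuous g} ->
  {for x, continuous (fun y => f y + g y)}.
Proof. by move=> hf hg; exact: continuousD hf hg. Qed.

Lemma continuousB_fun f g x : {for x, continuous f} -> {for x, continuous g} ->
  {for x, continuous (fun y => f y - g y)}.
Proof. by move=> hf hg; exact: continuousB hf hg. Qed.

Lemma continuousZ_fun f k x : {for x, continuous f} -> {for x, continuous (fun y => k * f y)}.
Proof. by move=> hf; have := continuousM (@cst_continuous _ _ k x) hf. Qed.

Lemma continuous_sum_fun n (h : 'I_n -> R -> R) x :
  (forall i, {for x, continuous (h i)}) -> {for x, continuous (fun y => \sum_(i < n) h i y)}.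
Proof.
move=> hc; rewrite -(fct_sumE _ _ h).
elim/big_ind: _ => [|f g|i _]; [exact: cst_continuous | exact: continuousD | exact: hc].
Qed.

Lemma continuous_affine a c : continuous (fun x : R => a + c * x).
Proof. by move=> x; apply/continuousD_fun/continuousZ_fun; [exact: cst_continuous|exact: cvg_id]. Qed.

Lemma is_deriveD_fun f g z (a b : R) : is_derive z 1 f a -> is_derive z 1 g b ->
  is_derive z 1 (fun x => f x + g x) (a + b).
Proof. by move=> fa gb; have := is_deriveD fa gb. Qed.

Lemma is_deriveB_fun f g z (a b : R) : is_derive z 1 f a -> is_derive z 1 g b ->
  is_derive z 1 (fun x => f x - g x) (a - b).
Proof. by move=> fa gb; have := is_deriveB fa gb. Qed.

Lemma is_deriveM_fun f g z (a b : R) : is_derive z 1 f a -> is_derive z 1 g b ->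
  is_derive z 1 (fun x => f x * g x) (f z * b + g z * a).
Proof. by move=> fa gb; have := is_deriveM fa gb. Qed.

Lemma is_deriveZ_fun f k z (a : R) : is_derive z 1 f a ->
  is_derive z 1 (fun x => k * f x) (k * a).
Proof. by move=> fa; have := is_deriveZ k fa. Qed.

Lemma is_derive_sum_fun n (h : 'I_n -> R -> R) (dh : 'I_n -> R) z :
  (forall i, is_derive z 1 (h i) (dh i)) ->
  is_derive z 1 (fun x => \sum_(i < n) h i x) (\sum_(i < n) dh i).
Proof. by move=> hd; rewrite -(fct_sumE _ _ h); apply: is_derive_sum. Qed.

Lemma is_derive_affine a c z : is_derive z 1 (fun x : R => a + c * x) c.
Proof.
apply: is_derive_eq (is_deriveD (is_derive_cst a z 1) (is_deriveZ c (is_derive_id z 1))) _.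
by rewrite add0r [_ *: _]mulr1.
Qed.

Lemma is_derive_ln_comp g (dg : R) z : is_derive z 1 g dg -> 0 < g z ->
  is_derive z 1 (fun x => ln (g x)) (dg / g z).
Proof.
move=> gd gz; have := @is_derive1_comp R (@ln R) g z _ _ (is_derive1_ln gz) gd.
by rewrite mulrC.
Qed.

Lemma is_derive_mul_ln g a (dg : R) z : is_derive z 1 g dg -> a = 0 \/ 0 < g z ->
  is_derive z 1 (fun x => a * ln (g x)) (a * dg / g z).
Proof.
move=> gd [->|gz].
  under [fun x => _]funext do rewrite mul0r.
  by rewrite !mul0r; exact: is_derive_cst.
by rewrite -mulrA; exact: is_deriveZ_fun (is_derive_ln_comp gd gz).
Qed.

Lemma ger0_is_derive_le f df a b : a <= b ->
  (forall x, a < x < b -> is_derive x 1 f (df x)) ->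
  (forall x, a < x < b -> 0 <= df x) ->
  {within `[a, b], continuous f} -> f a <= f b.
Proof.
rewrite le_eqVlt => /predU1P[->//|ab] hd hp hc.
have hd' x : x \in `]a, b[ -> is_derive x 1 f (df x) by rewrite in_itv /= => /hd.
have [c + E] := MVT ab hd' hc; rewrite in_itv /= => cab.
by rewrite -subr_ge0 E mulr_ge0 ?hp // subr_ge0 ltW.
Qed.

Lemma ger0_is_derive_le_cc f df a b : a <= b ->
  (forall x, a <= x <= b -> is_derive x 1 f (df x)) ->
  (forall x, a < x < b -> 0 <= df x) -> f a <= f b.
Proof.
move=> ab hd hp; apply: (ger0_is_derive_le ab _ hp) => [x /andP[ax xb]|].
  by apply: hd; rewrite !ltW.
apply: derivable_within_continuous => x; rewrite in_itv /= => /hd fx.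
exact: ex_derive.
Qed.

Lemma is_derive_sign_minimum f df p q :
  (forall x, Num.min p q <= x <= Num.max p q -> is_derive x 1 f (df x)) ->
  (forall x, Num.min p q < x < Num.max p q -> 0 <= (x - p) * df x) -> f p <= f q.
Proof.
move=> hd hs; case: (leP p q) => pq.
  apply: (ger0_is_derive_le_cc pq) => [x xpq|x xpq].
    by apply: hd; rewrite (min_l pq) (max_r pq).
  have := hs x; rewrite (min_l pq) (max_r pq) => /(_ xpq).
  by case/andP: xpq => px _; rewrite pmulr_rge0 // subr_gt0.
rewrite -lerN2; apply: (@ger0_is_derive_le_cc (fun x => - f x) (fun x => - df x) _ _ (ltW pq)).
  move=> x xqp; apply: is_deriveN; apply: hd.
  by rewrite (min_r (ltW pq)) (max_l (ltW pq)).
move=> x xqp; have := hs x; rewrite (min_r (ltW pq)) (max_l (ltW pq)) => /(_ xqp).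
by case/andP: xqp => _ xp; rewrite nmulr_rge0 ?oppr_ge0 // subr_lt0.
Qed.

End RealAnalysis.

Section BinaryDivergence.
Variable R : realType.
Implicit Types (a b c m p q x z : R).

Definition dbin x z : R := plogq x z + plogq (1 - x) (1 - z).

(* The probability of output [true] of [BSC ((1 - c) / 2)] on an input with
   probability [x] of [true]. *)
Definition bsc_out c x : R := (1 - c) / 2 + c * x.

Lemma plogq0 b : plogq 0 b = 0 :> R.
Proof. by rewrite /plogq eqxx. Qed.

Lemma plogq1 a : plogq a 1 = a * ln a / ln 2 :> R.
Proof.
rewrite /plogq /log2 divr1; case: eqP => [->|_]; first by rewrite !mul0r.
by rewrite mulrA.
Qed.

Lemma plogqxx a : plogq a a = 0 :> R.
Proof.
rewrite /plogq; case: eqP => // /eqP a0.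
by rewrite divff // /log2 ln1 mul0r mulr0.
Qed.

Lemma plogqE a b : 0 <= a -> a = 0 \/ 0 < b ->
  plogq a b = plogq a 1 - a * ln b / ln 2.
Proof.
rewrite plogq1 /plogq /log2 le_eqVlt => /predU1P[<-|a0] hb.
  by rewrite eqxx !mul0r subrr.
case: hb => [a0'|b0]; first by move: a0; rewrite a0' ltxx.
rewrite gt_eqF // ln_div ?posrE //; field; exact: ln2_neq0.
Qed.

Lemma plogqMl m x z : 0 <= m -> plogq (m * x) (m * z) = m * plogq x z.
Proof.
rewrite le_eqVlt => /predU1P[<-|m0]; first by rewrite !mul0r plogq0.
rewrite /plogq mulf_eq0 gt_eqF //=; case: eqP => _; first by rewrite mulr0.
by rewrite -mulf_div divff ?mul1r ?gt_eqF // mulrA.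
Qed.

Lemma dbinxx x : dbin x x = 0.
Proof. by rewrite /dbin !plogqxx addr0. Qed.

Lemma dbin_lnE x z : 0 <= x <= 1 -> x = 0 \/ 0 < z -> 1 - x = 0 \/ 0 < 1 - z ->
  dbin x z = (x * ln x + (1 - x) * ln (1 - x) - (x * ln z + (1 - x) * ln (1 - z))) / ln 2.
Proof.
case/andP=> x0 x1 hz hz'.
rewrite /dbin (plogqE x0 hz) (plogqE _ hz') ?subr_ge0 // !plogq1.
by rewrite !mulrBl !mulrDl; lra.
Qed.

Lemma plogq_ge a b : 0 <= a -> 0 < b -> (a - b) / ln 2 <= plogq a b :> R.
Proof.
rewrite le_eqVlt => /predU1P[<-|a0] b0.
  by rewrite plogq0 sub0r mulNr oppr_le0 divr_ge0 ?ltW // ln2_gt0.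
rewrite /plogq gt_eqF // /log2 mulrA ler_pM2r ?invr_gt0 ?ln2_gt0 //.
have hln : ln (b / a) <= b / a - 1.
  have := @le_ln1Dx R (b / a - 1); rewrite (addrC 1) subrK; apply.
  have : 0 < b / a by rewrite divr_gt0.
  lra.
rewrite (_ : ln (a / b) = - ln (b / a)) ?mulrN; last by rewrite !ln_div ?posrE // opprB.
have : a * ln (b / a) <= a * (b / a - 1) by rewrite ler_pM2l.
rewrite mulrBr mulr1 mulrCA divff ?mulr1 ?gt_eqF //; lra.
Qed.

Lemma dbin_ge0 x z : 0 <= x <= 1 -> 0 < z < 1 -> 0 <= dbin x z :> R.
Proof.
move=> /andP[x0 x1] /andP[z0 z1].
have h1 := plogq_ge x0 z0.
have h2 : (1 - x - (1 - z)) / ln 2 <= plogq (1 - x) (1 - z) by apply: plogq_ge; lra.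
apply: le_trans (lerD h1 h2); rewrite -mulrDl.
by rewrite (_ : x - z + (1 - x - (1 - z)) = 0) ?mul0r //; ring.
Qed.

Lemma dbin1_half : dbin 1 (1 / 2) = 1 :> R.
Proof.
rewrite /dbin subrr plogq0 addr0 /plogq oner_eq0 mul1r /log2.
by rewrite (_ : 1 / (1 / 2) = 2) ?divff ?ln2_neq0 //; field.
Qed.

Lemma bsc_out_cc c x : -1 <= c <= 1 -> 0 <= x <= 1 -> 0 <= bsc_out c x <= 1.
Proof. by rewrite /bsc_out => /andP[? ?] /andP[? ?]; apply/andP; split; nra. Qed.

Lemma bsc_out_oo c x : -1 <= c <= 1 -> 0 < x < 1 -> 0 < bsc_out c x < 1.
Proof. by rewrite /bsc_out => /andP[? ?] /andP[? ?]; apply/andP; split; nra. Qed.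

Lemma bsc_out_half c : bsc_out c (1 / 2) = 1 / 2 :> R.
Proof. by rewrite /bsc_out; field. Qed.

Section BSCContraction.
Variables c p : R.
Hypotheses (hc : -1 <= c <= 1) (hp : 0 <= p <= 1).

(* Up to an additive constant, [cross_gap z] is
   [(c ^+ 2 * dbin p z - dbin rp (bsc_out c z)) * ln 2]; its derivative [cross_gap']
   (written as the derivative rules produce it) has the sign of [z - p]. *)
Let rp := bsc_out c p.
Let cross_gap z := rp * ln (bsc_out c z) + (1 - rp) * ln (1 - bsc_out c z)
  - c ^+ 2 * (p * ln z + (1 - p) * ln (1 - z)).
Let cross_gap' z := rp * c / bsc_out c z + (1 - rp) * (0 - c) / (1 - bsc_out c z)
  - c ^+ 2 * (p * 1 / z + (1 - p) * (0 - 1) / (1 - z)).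

Let is_derive_cross_gap z : z = p \/ 0 < z < 1 -> is_derive z 1 cross_gap (cross_gap' z).
Proof.
move=> hz.
have side g a : 0 <= a -> (z = p -> g z = a) -> (0 < z < 1 -> 0 < g z) -> a = 0 \/ 0 < g z.
  move=> a0 gp gz; case: hz => [/gp ->|/gz]; last by right.
  by move: a0; rewrite le_eqVlt => /predU1P[|]; [left | right].
have [rp0 rp1] : 0 <= rp /\ 0 <= 1 - rp.
  by rewrite /rp; have /andP[? ?] := bsc_out_cc hc hp; split; lra.
have [p0 p1] : 0 <= p /\ 0 <= 1 - p by case/andP: hp; split; lra.
have rz z' : 0 < z' < 1 -> 0 < bsc_out c z' /\ 0 < 1 - bsc_out c z'.
  by move=> /(bsc_out_oo hc) /andP[? ?]; split; lra.
rewrite /cross_gap /cross_gap'.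
apply: is_deriveB_fun; first (apply: is_deriveD_fun; apply: is_derive_mul_ln).
- exact: is_derive_affine.
- by apply: (side (bsc_out c)) => // [-> //|/rz[]].
- exact: is_deriveB_fun (is_derive_cst _ _ _) (is_derive_affine _ _ _).
- by apply: (side (fun x => 1 - bsc_out c x)) => // [-> //|/rz[]].
- apply: is_deriveZ_fun; apply: is_deriveD_fun; apply: is_derive_mul_ln.
  + by apply: (side (fun x => x)) => // /andP[].
  + by apply: (side (fun x => 1 - x)) => // [-> //|/andP[_]]; rewrite subr_gt0.
Qed.

Let cross_gap'_sign z : 0 < z < 1 -> 0 <= (z - p) * cross_gap' z.
Proof.
move=> hz; have /andP[r0 r1] := bsc_out_oo hc hz; case/andP: hz => z0 z1.
have -> : (z - p) * cross_gap' z = c ^+ 2 * (1 - c ^+ 2) * ((z - p) * (z - 1 / 2)) ^+ 2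
    / (z * (1 - z) * (bsc_out c z * (1 - bsc_out c z))).
  rewrite /cross_gap' /rp /bsc_out in r0 r1 *; field.
  by apply/and4P; split; apply: lt0r_neq0; lra.
have c2 : 0 <= 1 - c ^+ 2 by case/andP: hc => ? ?; nra.
apply: divr_ge0; first by apply/mulr_ge0/sqr_ge0/mulr_ge0 => //; exact: sqr_ge0.
by apply/ltW/mulr_gt0; apply/mulr_gt0; rewrite ?subr_gt0.
Qed.

Lemma dbin_bsc_out_le q : 0 < q < 1 \/ q = p ->
  dbin (bsc_out c p) (bsc_out c q) <= c ^+ 2 * dbin p q.
Proof.
case=> [hq|->]; last by rewrite !dbinxx mulr0.
have /andP[rq0 rq1] := bsc_out_oo hc hq.
have rp01 := bsc_out_cc hc hp.
case/andP: (hq) => q0 q1; case/andP: (hp) => p0 p1.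
rewrite (@dbin_lnE (bsc_out c p)) ?(@dbin_lnE p) //; try by right; lra.
rewrite mulrA ler_pM2r ?invr_gt0 ?ln2_gt0 //.
rewrite -subr_ge0 [X in 0 <= X](_ : _ = cross_gap q - cross_gap p); last first.
  by rewrite /cross_gap /rp; ring.
rewrite subr_ge0.
apply: (@is_derive_sign_minimum _ _ cross_gap') => x.
  move=> hx; apply: is_derive_cross_gap.
  move: hx; rewrite ge_min le_max => /andP[h1 h2].
  case: (ltgtP x p) => [xp|px|->]; [right|right|by left]; apply/andP; split;
    by case/orP: h1; case/orP: h2; lra.
rewrite gt_min lt_max => /andP[h1 h2]; apply: cross_gap'_sign.
by apply/andP; split; case/orP: h1; case/orP: h2; lra.
Qed.

End BSCContraction.
End BinaryDivergence.

Section XlnxSym.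
Variable R : realType.
Implicit Types (a c s t u v x y : R).

Definition xlnx_sym x : R := (1 + x) * ln (1 + x) + (1 - x) * ln (1 - x).

Definition xlnx_sym' c y : R := c * (ln (1 + c * y) - ln (1 - c * y)).

Lemma xlnx_symN x : xlnx_sym (- x) = xlnx_sym x.
Proof. by rewrite /xlnx_sym opprK addrC. Qed.

Lemma xlnx_sym0 : xlnx_sym 0 = 0.
Proof. by rewrite /xlnx_sym addr0 subr0 ln1 mulr0 addr0. Qed.

Lemma continuous_xlnx_symM c : continuous (fun x => xlnx_sym (c * x)).
Proof.
move=> x; rewrite /xlnx_sym.
apply: (@continuousD_fun R (fun y => (1 + c * y) * ln (1 + c * y))
  (fun y => (1 - c * y) * ln (1 - c * y))).
  by have := continuous_comp (@continuous_affine R 1 c x) (@continuous_xlnx R _).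
under [fun y => _]funext do rewrite -mulNr.
by have := continuous_comp (@continuous_affine R 1 (- c) x) (@continuous_xlnx R _).
Qed.

Lemma affine_cc_gt0 c y : -1 <= c <= 1 -> 0 <= y < 1 -> 0 < 1 + c * y /\ 0 < 1 - c * y.
Proof. by move=> /andP[? ?] /andP[? ?]; split; nra. Qed.

Lemma is_derive_xlnx_affine a c y : 0 < a + c * y ->
  is_derive y 1 (fun x => (a + c * x) * ln (a + c * x)) (c * ln (a + c * y) + c).
Proof.
move=> hy; have da := @is_derive_affine R a c y.
apply: is_derive_eq (is_deriveM_fun da (is_derive_ln_comp da hy)) _.
by rewrite mulrCA divff ?mulr1 ?gt_eqF // addrC mulrC.
Qed.

Lemma is_derive_xlnx_symM c y : 0 < 1 + c * y -> 0 < 1 - c * y ->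
  is_derive y 1 (fun x => xlnx_sym (c * x)) (xlnx_sym' c y).
Proof.
rewrite -mulNr => h1 h2; rewrite /xlnx_sym.
under [fun x => _]funext do rewrite -mulNr.
apply: is_derive_eq (is_deriveD_fun (is_derive_xlnx_affine h1) (is_derive_xlnx_affine h2)) _.
by rewrite /xlnx_sym' !mulNr; ring.
Qed.

Lemma is_derive_xlnx_sym' c y : 0 < 1 + c * y -> 0 < 1 - c * y ->
  is_derive y 1 (xlnx_sym' c) (2 * c ^+ 2 / (1 - c ^+ 2 * y ^+ 2)).
Proof.
rewrite -mulNr => h1 h2; rewrite /xlnx_sym'.
under [fun x => _]funext do rewrite mulrBr -!mulNr.
have d1 := is_derive_mul_ln (a := c) (@is_derive_affine R 1 c y) (or_intror h1).
have d2 := is_derive_mul_ln (a := - c) (@is_derive_affine R 1 (- c) y) (or_intror h2).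
apply: is_derive_eq (is_deriveD_fun d1 d2) _.
rewrite mulNr in h2 *; field.
have -> : 1 - (c * y) ^+ 2 = (1 + c * y) * (1 - c * y) by ring.
by rewrite !gt_eqF // mulr_gt0.
Qed.

Lemma xlnx_sym'0 c : xlnx_sym' c 0 = 0.
Proof. by rewrite /xlnx_sym' mulr0 addr0 subr0 subrr mulr0. Qed.

Lemma frac_tangent_le u v a : 0 <= u <= 1 -> 0 <= v <= 1 -> 0 <= a < 1 ->
  v / (1 - v * a) + (u - v) / (1 - v * a) ^+ 2 <= u / (1 - u * a).
Proof.
move=> /andP[u0 u1] /andP[v0 v1] /andP[a0 a1].
have ua : 0 < 1 - u * a by nra.
have va : 0 < 1 - v * a by nra.
rewrite -subr_ge0.
have -> : u / (1 - u * a) - (v / (1 - v * a) + (u - v) / (1 - v * a) ^+ 2)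
    = (u - v) ^+ 2 * a / ((1 - u * a) * (1 - v * a) ^+ 2).
  by field; rewrite !gt_eqF.
apply: divr_ge0; first by apply: mulr_ge0 => //; exact: sqr_ge0.
by apply/ltW/mulr_gt0 => //; exact: exprn_gt0.
Qed.

(* Jensen's inequality for the convex increasing map [u |-> u / (1 - u * a)],
   through its tangent line at [v]. *)
Lemma frac_mean_ge n (w u : 'I_n -> R) v a :
  (forall i, 0 <= w i) -> \sum_(i < n) w i = 1 -> (forall i, 0 <= u i <= 1) ->
  0 <= v <= 1 -> v <= \sum_(i < n) w i * u i -> 0 <= a < 1 ->
  v / (1 - v * a) <= \sum_(i < n) w i * (u i / (1 - u i * a)).
Proof.
move=> w0 w1 u01 v01 vle a01.
apply: le_trans (ler_sum _ (fun i _ => ler_wpM2l (w0 i) (frac_tangent_le (u01 i) v01 a01))).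
rewrite [X in _ <= X](_ : _ = v / (1 - v * a) * \sum_(i < n) w i
    + (\sum_(i < n) w i * u i - v * \sum_(i < n) w i) / (1 - v * a) ^+ 2); last first.
  rewrite !mulr_sumr -sumrB mulr_suml -big_split.
  by apply: eq_bigr => i _ /=; ring.
by rewrite w1 !mulr1 lerDl divr_ge0 ?sqr_ge0 // subr_ge0.
Qed.

Section Mean.
Variables (n : nat) (w c : 'I_n -> R) (s : R).
Hypotheses (w_ge0 : forall i, 0 <= w i) (w_sum1 : \sum_(i < n) w i = 1).
Hypotheses (c_cc : forall i, -1 <= c i <= 1) (s_cc : -1 <= s <= 1).
Hypothesis s2_le : s ^+ 2 <= \sum_(i < n) w i * c i ^+ 2.

(* [gap] and its derivative [gap'] vanish at [0], and its second derivative [gap'']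
   is nonnegative on [[0, 1)] by [frac_mean_ge]. *)
Let gap x := \sum_(i < n) w i * xlnx_sym (c i * x) - xlnx_sym (s * x).
Let gap' y := \sum_(i < n) w i * xlnx_sym' (c i) y - xlnx_sym' s y.
Let gap'' y := \sum_(i < n) w i * (2 * c i ^+ 2 / (1 - c i ^+ 2 * y ^+ 2))
  - 2 * s ^+ 2 / (1 - s ^+ 2 * y ^+ 2).

Let is_derive_gap y : 0 <= y < 1 -> is_derive y 1 gap (gap' y).
Proof.
move=> hy; apply: is_deriveB_fun.
  apply: is_derive_sum_fun => i; apply: is_deriveZ_fun.
  by have [] := affine_cc_gt0 (c_cc i) hy; exact: is_derive_xlnx_symM.
by have [] := affine_cc_gt0 s_cc hy; exact: is_derive_xlnx_symM.
Qed.

Let is_derive_gap' y : 0 <= y < 1 -> is_derive y 1 gap' (gap'' y).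
Proof.
move=> hy; apply: is_deriveB_fun.
  apply: is_derive_sum_fun => i; apply: is_deriveZ_fun.
  by have [] := affine_cc_gt0 (c_cc i) hy; exact: is_derive_xlnx_sym'.
by have [] := affine_cc_gt0 s_cc hy; exact: is_derive_xlnx_sym'.
Qed.

Let gap''_ge0 y : 0 <= y < 1 -> 0 <= gap'' y.
Proof.
move=> /andP[y0 y1]; rewrite subr_ge0 -mulrA.
rewrite (eq_bigr (fun i => 2 * (w i * (c i ^+ 2 / (1 - c i ^+ 2 * y ^+ 2))))); last first.
  by move=> i _; ring.
rewrite -mulr_sumr ler_pM2l //; apply: frac_mean_ge => // [i||].
- by have /andP[? ?] := c_cc i; apply/andP; split; nra.
- by case/andP: s_cc => ? ?; apply/andP; split; nra.
- by apply/andP; split; nra.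
Qed.

Let gap'_ge0 y : 0 <= y < 1 -> 0 <= gap' y.
Proof.
move=> /andP[y0 y1].
have <- : gap' 0 = 0.
  by rewrite /gap' xlnx_sym'0 big1 ?subr0 // => i _; rewrite xlnx_sym'0 mulr0.
apply: (ger0_is_derive_le_cc y0) => x /andP[x0 x1].
  by apply: is_derive_gap'; apply/andP; split; lra.
by apply: gap''_ge0; apply/andP; split; lra.
Qed.

Let xlnx_sym_mean_le_nneg t : 0 <= t <= 1 ->
  xlnx_sym (s * t) <= \sum_(i < n) w i * xlnx_sym (c i * t).
Proof.
case/andP=> t0 t1; rewrite -subr_ge0.
have gap0 : gap 0 = 0.
  by rewrite /gap mulr0 xlnx_sym0 big1 ?subr0 // => i _; rewrite mulr0 xlnx_sym0 mulr0.
suff : gap 0 <= gap t by rewrite gap0.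
apply: (ger0_is_derive_le t0) => [x /andP[x0 x1]|x /andP[x0 x1]|].
- by apply: is_derive_gap; apply/andP; split; lra.
- by apply: gap'_ge0; apply/andP; split; lra.
apply: continuous_subspaceT => x.
have sum_cont : {for x, continuous (fun y => \sum_(i < n) w i * xlnx_sym (c i * y))}.
  apply: (@continuous_sum_fun _ n (fun i y => w i * xlnx_sym (c i * y))) => i.
  exact (continuousZ_fun (@continuous_xlnx_symM (c i) x)).
exact (continuousB_fun sum_cont (@continuous_xlnx_symM s x)).
Qed.

Lemma xlnx_sym_mean_le t : -1 <= t <= 1 ->
  xlnx_sym (s * t) <= \sum_(i < n) w i * xlnx_sym (c i * t).
Proof.
case/andP=> t0 t1; case: (lerP 0 t) => [t_ge0|t_lt0].
  by apply: xlnx_sym_mean_le_nneg; apply/andP.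
rewrite -xlnx_symN -mulrN (eq_bigr (fun i => w i * xlnx_sym (c i * - t))).
  by apply: xlnx_sym_mean_le_nneg; apply/andP; split; lra.
by move=> i _; rewrite mulrN xlnx_symN.
Qed.

End Mean.
End XlnxSym.

Section Information.
Variable R : realType.
Implicit Types (p q : R) (P : bool -> R).

Definition negentropy (Y : finType) (Q : Y -> R) : R := \sum_y plogq (Q y) 1.

Definition bern p : bool -> R := fun b => if b then p else 1 - p.

Definition unif : bool -> R := fun=> 1 / 2.

Lemma outdE (Y : finType) (V : bool -> Y -> R) P y :
  outd V P y = P true * V true y + P false * V false y.
Proof. by rewrite /outd big_bool. Qed.

Lemma distr_bool_sum P : is_distr P -> P true + P false = 1.
Proof. by case=> _; rewrite big_bool. Qed.

Lemma distr_bern P : is_distr P -> P = bern (P true).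
Proof. by move=> /distr_bool_sum P1; apply/funext => -[] //=; lra. Qed.

Lemma distr_bool_cc P : is_distr P -> 0 <= P true <= 1.
Proof.
move=> hP; have P1 := distr_bool_sum hP; case: hP => P0 _.
by have := P0 false; have := P0 true; rewrite !le_eqVlt => ? ?; apply/andP; split; lra.
Qed.

Lemma is_distr_bern p : 0 <= p <= 1 -> is_distr (bern p).
Proof. by case/andP=> p0 p1; split => [[]|]; rewrite /bern ?big_bool /=; lra. Qed.

Lemma unif_bern : unif = bern (1 / 2).
Proof. by apply/funext => -[] //=; rewrite /unif; field. Qed.

Lemma is_distr_unif : is_distr unif.
Proof. by rewrite unif_bern; apply: is_distr_bern; apply/andP; split; lra. Qed.

Lemma KL_bern p q : KL (bern p) (bern q) = dbin p q.
Proof. by rewrite /KL big_bool. Qed.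

Lemma plogqM_lnE a v o : 0 <= a -> 0 <= v -> a * v = 0 \/ 0 < o ->
  plogq (a * v) (a * o) = a * plogq v 1 - a * v * ln o / ln 2 :> R.
Proof.
rewrite le_eqVlt => /predU1P[<-|a0] v0 h; first by rewrite !mul0r plogq0 subrr.
rewrite plogqMl ?ltW // (@plogqE _ v o) //; first by rewrite mulrBr !mulrA.
by case: h => [/eqP|]; [rewrite mulf_eq0 gt_eqF //= => /eqP; left | right].
Qed.

Lemma MI_negentropyE (Y : finType) P (V : bool -> Y -> R) :
  (forall x, 0 <= P x) -> (forall x y, 0 <= V x y) ->
  MI P V = \sum_x P x * negentropy (V x) - negentropy (outd V P).
Proof.
move=> P0 V0; rewrite /MI.
have term x y : plogq (P x * V x y) (P x * outd V P y) =
    P x * plogq (V x y) 1 - P x * V x y * (ln (outd V P y) / ln 2).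
  rewrite mulrA; apply: plogqM_lnE => //.
  case: (eqVneq (P x * V x y) 0) => h; [by left | right].
  have : 0 < P x * V x y by rewrite lt_def h mulr_ge0.
  have := mulr_ge0 (P0 false) (V0 false y); have := mulr_ge0 (P0 true) (V0 true y).
  by rewrite outdE; case: x h; lra.
under eq_bigr do under eq_bigr do rewrite term.
rewrite (eq_bigr (fun x => P x * negentropy (V x)
    - \sum_y P x * V x y * (ln (outd V P y) / ln 2))); last first.
  by move=> x _; rewrite sumrB /negentropy mulr_sumr.
rewrite sumrB exchange_big /negentropy; congr (_ - _); apply: eq_bigr => y _.
by rewrite -mulr_suml plogq1 mulrA.
Qed.

Section SymmetricChannel.
Variables (Y : finType) (V : bool -> Y -> R) (sg : Y -> Y).
Hypotheses (sgK : involutive sg) (V_sym : forall y, V false y = V true (sg y)).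
Hypothesis V_ge0 : forall x y, 0 <= V x y.

Lemma negentropy_sym : negentropy (V false) = negentropy (V true).
Proof.
rewrite /negentropy (reindex_inj (inv_inj sgK)).
by apply: eq_bigr => y _; rewrite V_sym sgK.
Qed.

Lemma MI_symE P : is_distr P -> MI P V = negentropy (V true) - negentropy (outd V P).
Proof.
move=> hP; rewrite MI_negentropyE //; last by case: hP.
by rewrite big_bool /= negentropy_sym -mulrDl distr_bool_sum // mul1r.
Qed.

Lemma KL_outd_unifE P : is_distr P ->
  KL (outd V P) (outd V unif) = negentropy (outd V P) - negentropy (outd V unif).
Proof.
move=> hP; have [P0 _] := hP; have P1 := distr_bool_sum hP.
have Vt y : V true (sg y) = V false y by rewrite V_sym.
have Vf y : V false (sg y) = V true y by rewrite V_sym sgK.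
pose L y := ln (outd V unif y) / ln 2.
have term y : plogq (outd V P y) (outd V unif y) = plogq (outd V P y) 1 - outd V P y * L y.
  rewrite /L mulrA; apply: plogqE; first by rewrite outdE addr_ge0 ?mulr_ge0.
  have := V_ge0 true y; have := V_ge0 false y; have := P0 true; have := P0 false.
  rewrite !outdE /unif => ? ? ? ?.
  case: (ltrP 0 (1 / 2 * V true y + 1 / 2 * V false y)) => h; [by right | left].
  have -> : V true y = 0 by lra.
  have -> : V false y = 0 by lra.
  by rewrite !mulr0 addr0.
rewrite /KL (eq_bigr _ (fun y _ => term y)) sumrB; congr (_ - _).
have L_sym y : L (sg y) = L y by rewrite /L !outdE /unif Vt Vf addrC.
(* averaging the sum with its image under [sg] replaces [outd V P] by [outd V unif] *)
have out_sym y : outd V P y + outd V P (sg y) = 2 * outd V unif y.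
  by rewrite !outdE /unif Vt Vf (_ : P false = 1 - P true); [field | lra].
have reidx : \sum_y outd V P y * L y = \sum_y outd V P (sg y) * L y.
  by rewrite (reindex_inj (inv_inj sgK)); apply: eq_bigr => y _; rewrite L_sym.
transitivity ((\sum_y outd V P y * L y + \sum_y outd V P (sg y) * L y) / 2).
  by rewrite -reidx; field.
rewrite -big_split mulr_suml /negentropy; apply: eq_bigr => y _ /=.
by rewrite -mulrDl out_sym plogq1 /L; field; exact: ln2_neq0.
Qed.

Lemma MI_unif_split P : is_distr P -> MI unif V = MI P V + KL (outd V P) (outd V unif).
Proof.
move=> hP; rewrite (MI_symE hP) (MI_symE is_distr_unif) (KL_outd_unifE hP).
by rewrite addrA subrK.
Qed.

End SymmetricChannel.

Lemma dbin_half x : 0 <= x <= 1 -> dbin x (1 / 2) = xlnx_sym (2 * x - 1) / (2 * ln 2) :> R.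
Proof.
case/andP=> x0 x1.
have plogq_half a : plogq a (1 / 2) = a * ln (2 * a) / ln 2 :> R.
  rewrite /plogq /log2; case: eqP => [->|_]; first by rewrite !mul0r.
  by rewrite mulrA (_ : a / (1 / 2) = 2 * a) //; field.
rewrite /dbin (_ : 1 - 1 / 2 = 1 / 2); last by field.
rewrite !plogq_half /xlnx_sym (_ : 1 + (2 * x - 1) = 2 * x); last by ring.
rewrite (_ : 1 - (2 * x - 1) = 2 * (1 - x)); last by ring.
by field; exact: ln2_neq0.
Qed.

(* An output [y] and its mirror image, with transition probabilities [b] and [a]
   from [true] and [false] to [y], form a BSC of correlation [(b - a) / (a + b)]
   used with probability [a + b]. *)
Lemma plogq_pair_split a b p q : 0 <= a -> 0 <= b ->
  plogq (p * b + (1 - p) * a) (q * b + (1 - q) * a)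
    + plogq (p * a + (1 - p) * b) (q * a + (1 - q) * b)
  = (a + b) * dbin (bsc_out ((b - a) / (a + b)) p) (bsc_out ((b - a) / (a + b)) q) :> R.
Proof.
move=> a0 b0; case: (eqVneq (a + b) 0) => [ab0|ab0].
  have [-> ->] : a = 0 /\ b = 0 by split; lra.
  by rewrite !mulr0 !addr0 plogq0 addr0 mul0r.
have ab : 0 < a + b by rewrite lt_def ab0 addr_ge0.
have e1 x : x * b + (1 - x) * a = (a + b) * bsc_out ((b - a) / (a + b)) x.
  by rewrite /bsc_out; field.
have e2 x : x * a + (1 - x) * b = (a + b) * (1 - bsc_out ((b - a) / (a + b)) x).
  by rewrite /bsc_out; field.
by rewrite !e1 !e2 !plogqMl ?ltW // -mulrDr.
Qed.

End Information.

Arguments unif {R}.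
Arguments is_distr_unif {R}.

Section Secrecy.
Variable R : realType.
Variables (Y Z : finType) (A : bool -> Y -> R) (B : bool -> Z -> R).
Variables (sgY : Y -> Y) (sgZ : Z -> Z).
Hypotheses (sgYK : involutive sgY) (A_sym : forall y, A false y = A true (sgY y)).
Hypotheses (sgZK : involutive sgZ) (B_sym : forall z, B false z = B true (sgZ z)).
Hypotheses (A_ge0 : forall x y, 0 <= A x y) (B_ge0 : forall x z, 0 <= B x z).

Lemma secrecy_capacity_unif :
  (forall p, 0 <= p <= 1 ->
     KL (outd B (bern p)) (outd B unif) <= KL (outd A (bern p)) (outd A unif)) ->
  secrecy_capacity A B = MI unif A - MI unif B.
Proof.
move=> KL_le; have MI_le P : is_distr P -> MI P A - MI P B <= MI unif A - MI unif B.
  move=> hP; rewrite (MI_unif_split sgYK A_sym A_ge0 hP) (MI_unif_split sgZK B_sym B_ge0 hP).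
  by rewrite (distr_bern hP) in KL_le *; have := KL_le _ (distr_bool_cc hP); lra.
apply/le_anti/andP; split.
  apply: ge_sup => [|r [P hP <-]]; last exact: MI_le.
  by exists (MI unif A - MI unif B), unif => //; exact: is_distr_unif.
apply: ub_le_sup; last by exists unif => //; exact: is_distr_unif.
by exists (MI unif A - MI unif B) => r [P hP <-]; exact: MI_le.
Qed.

End Secrecy.

Section BISO.
Variables (R : realType) (l : nat) (W : bool -> 'I_(2 * l + 1) -> R).
Hypothesis hW : is_BISO W.
Implicit Types (p q : R) (y : 'I_(2 * l + 1)).

(* The BISO channel is the mixture over output pairs [{y, -y}] of the channels
   [BSC ((1 - corrW y) / 2)], pair [{y, -y}] being reached with probability [massW y]
   (each pair is counted twice by sums over [y], whence the halves). *)
Definition massW y := W false y + W true y.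
Definition corrW y := (W true y - W false y) / massW y.
Definition chi2W := \sum_y massW y / 2 * corrW y ^+ 2.

Lemma W_ge0 x y : 0 <= W x y.
Proof. by case: hW => hc _; case: (hc x). Qed.

Lemma W_sum1 x : \sum_y W x y = 1.
Proof. by case: hW => hc _; case: (hc x). Qed.

Lemma W_sym y : W false y = W true (rev_ord y).
Proof. by case: hW. Qed.

Lemma massW_ge0 y : 0 <= massW y / 2.
Proof. by rewrite divr_ge0 ?addr_ge0 ?W_ge0. Qed.

Lemma massW_sum : \sum_y massW y / 2 = 1.
Proof. by rewrite -mulr_suml big_split /= !W_sum1; field. Qed.

Lemma corrW_cc y : -1 <= corrW y <= 1.
Proof.
rewrite /corrW /massW; have a0 := W_ge0 false y; have b0 := W_ge0 true y.
case: (eqVneq (W false y + W true y) 0) => [->|m0]; first by rewrite invr0 mulr0; lra.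
have mp : 0 < W false y + W true y by rewrite lt_def m0 addr_ge0.
set c := _ / _; have : c * (W false y + W true y) = W true y - W false y by rewrite /c; field.
by move=> hc; apply/andP; split; nra.
Qed.

Lemma chi2W_le1 : chi2W <= 1.
Proof.
rewrite -massW_sum; apply: ler_sum => y _; rewrite ler_piMr ?massW_ge0 //.
by have /andP[? ?] := corrW_cc y; rewrite expr2; nra.
Qed.

Lemma KL_outW p q : KL (outd W (bern p)) (outd W (bern q))
  = \sum_y massW y / 2 * dbin (bsc_out (corrW y) p) (bsc_out (corrW y) q).
Proof.
have Wt y : W true (rev_ord y) = W false y by rewrite W_sym.
have Wf y : W false (rev_ord y) = W true y by rewrite W_sym rev_ordK.
pose F y := plogq (outd W (bern p) y) (outd W (bern q) y).
have reidx : \sum_y F y = \sum_y F (rev_ord y) by rewrite (reindex_inj rev_ord_inj).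
transitivity ((\sum_y F y + \sum_y F (rev_ord y)) / 2); first by rewrite /KL -reidx; field.
rewrite -big_split mulr_suml; apply: eq_bigr => y _ /=.
rewrite /F !outdE Wt Wf /= plogq_pair_split ?W_ge0 // /corrW /massW.
by field.
Qed.

Lemma KL_outW_le p q : 0 <= p <= 1 -> 0 < q < 1 \/ q = p ->
  KL (outd W (bern p)) (outd W (bern q)) <= chi2W * dbin p q.
Proof.
move=> hp hq; rewrite KL_outW /chi2W mulr_suml; apply: ler_sum => y _.
rewrite -[X in _ <= X]mulrA; apply: ler_wpM2l; first exact: massW_ge0.
exact: dbin_bsc_out_le (corrW_cc y) hp q hq.
Qed.

Lemma KL_outW_unif p : 0 <= p <= 1 -> KL (outd W (bern p)) (outd W unif)
  = \sum_y massW y / 2 * (xlnx_sym (corrW y * (2 * p - 1)) / (2 * ln 2)).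
Proof.
move=> hp; rewrite unif_bern KL_outW; apply: eq_bigr => y _.
rewrite bsc_out_half dbin_half ?bsc_out_cc ?corrW_cc //.
by congr (_ * (xlnx_sym _ / _)); rewrite /bsc_out; field.
Qed.

Lemma KL_outW_unif_ge0 p : 0 <= p <= 1 -> 0 <= KL (outd W (bern p)) (outd W unif).
Proof.
move=> hp; rewrite unif_bern KL_outW; apply: sumr_ge0 => y _.
rewrite mulr_ge0 ?massW_ge0 // bsc_out_half dbin_ge0 ?bsc_out_cc ?corrW_cc //.
by apply/andP; split; lra.
Qed.

Lemma KL_bsc_le_outW s p : -1 <= s <= 1 -> s ^+ 2 <= chi2W -> 0 <= p <= 1 ->
  dbin (bsc_out s p) (1 / 2) <= KL (outd W (bern p)) (outd W unif).
Proof.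
move=> hs s2 hp; rewrite KL_outW_unif // dbin_half ?bsc_out_cc //.
rewrite (_ : 2 * bsc_out s p - 1 = s * (2 * p - 1)); last by rewrite /bsc_out; field.
under eq_bigr do rewrite mulrA.
rewrite -mulr_suml ler_pM2r ?invr_gt0 ?mulr_gt0 ?ln2_gt0 //.
apply: xlnx_sym_mean_le => //; [exact: massW_ge0 | exact: massW_sum | exact: corrW_cc |].
by case/andP: hp => ? ?; apply/andP; split; lra.
Qed.

Let eta_set := [set r : R | exists P Q : bool -> R,
  [/\ is_distr P, is_distr Q, abs_cont P Q, 0 < KL P Q &
       r = KL (outd W P) (outd W Q) / KL P Q]].

Let eta_set_ub : ubound eta_set chi2W.
Proof.
move=> r [P [Q [hP hQ PQ KL0 ->]]].
have P1 := distr_bool_sum hP; have Q1 := distr_bool_sum hQ.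
have /andP[q0 q1] := distr_bool_cc hQ.
rewrite (distr_bern hP) (distr_bern hQ) KL_bern in KL0 *.
rewrite ler_pdivrMr // KL_outW_le ?distr_bool_cc //.
case: (ltrP 0 (Q true)) => [q_gt0|q_le0]; last first.
  by right; rewrite PQ //; lra.
case: (ltrP (Q true) 1) => [q_lt1|q_ge1]; first by left; apply/andP.
by right; have := PQ false; lra.
Qed.

Let eta_set_ratio p : 0 <= p <= 1 -> 0 < dbin p (1 / 2) ->
  eta_set (KL (outd W (bern p)) (outd W unif) / dbin p (1 / 2)).
Proof.
move=> hp d0; exists (bern p), unif; split.
- exact: is_distr_bern.
- exact: is_distr_unif.
- by move=> t; rewrite /unif; lra.
- by rewrite unif_bern KL_bern.
- by rewrite unif_bern KL_bern.
Qed.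

Let eta_set1 : eta_set (KL (outd W (bern 1)) (outd W unif)).
Proof.
rewrite -[X in eta_set X]divr1 -{2}dbin1_half.
by apply: eta_set_ratio; rewrite ?dbin1_half ?ltr01 //; apply/andP; split; lra.
Qed.

Lemma etaKL_le_chi2W : etaKL W <= chi2W.
Proof. exact: ge_sup (ex_intro _ _ eta_set1) eta_set_ub. Qed.

Lemma etaKL_ge0 : 0 <= etaKL W.
Proof.
apply: le_trans (ub_le_sup (ex_intro _ _ eta_set_ub) eta_set1).
by apply: KL_outW_unif_ge0; apply/andP; split; lra.
Qed.

Lemma etaKL_le1 : etaKL W <= 1.
Proof. exact: le_trans etaKL_le_chi2W chi2W_le1. Qed.

Lemma KL_outW_unif_le p : 0 <= p <= 1 ->
  KL (outd W (bern p)) (outd W unif) <= etaKL W * dbin p (1 / 2).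
Proof.
move=> hp; have half_oo : 0 < (1 / 2 : R) < 1 by apply/andP; split; lra.
case: (ltrP 0 (dbin p (1 / 2))) => [d0|d_le0].
  by rewrite -ler_pdivrMr //; have := ub_le_sup (ex_intro _ _ eta_set_ub) (eta_set_ratio hp d0).
have d0 : dbin p (1 / 2) = 0 by apply/le_anti; rewrite d_le0 dbin_ge0.
by rewrite d0 mulr0; have := KL_outW_le hp (or_introl half_oo); rewrite -unif_bern d0 mulr0.
Qed.

Lemma capacityW : capacity W = MI unif W.
Proof.
have MI_le P : is_distr P -> MI P W <= MI unif W.
  move=> hP; rewrite (MI_unif_split (@rev_ordK _) W_sym W_ge0 hP) lerDl (distr_bern hP).
  exact/KL_outW_unif_ge0/distr_bool_cc.
apply/le_anti/andP; split.
  by apply: ge_sup => [|r [P hP <-]]; [exists (MI unif W), unif; first exact: is_distr_unif | exact: MI_le].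
apply: ub_le_sup; last by exists unif => //; exact: is_distr_unif.
by exists (MI unif W) => r [P hP <-]; exact: MI_le.
Qed.

End BISO.

Section Channels.
Variable R : realType.
Implicit Types (e d p : R).

Lemma sum_option_bool (F : option bool -> R) :
  \sum_(o : option bool) F o = F None + (F (Some true) + F (Some false)).
Proof.
rewrite (bigD1 None) //=; congr (_ + _).
rewrite (reindex_onto Some (fun o => if o is Some b then b else true)) /=.
  by rewrite (eq_bigl xpredT) ?big_bool // => j; rewrite eqxx.
by case.
Qed.

Definition option_negb (o : option bool) := omap negb o.

Lemma option_negbK : involutive option_negb.
Proof. by case => [[]|]. Qed.

Lemma BEC_sym e y : BEC e false y = BEC e true (option_negb y).
Proof. by case: y => [[]|]. Qed.

Lemma BEC_ge0 e : 0 <= e <= 1 -> forall x y, 0 <= BEC e x y.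
Proof. by case/andP=> e0 e1 [] [[]|] /=; rewrite ?subr_ge0. Qed.

Lemma MI_unif_BEC e : 0 <= e <= 1 -> MI unif (BEC e) = 1 - e.
Proof.
move=> he; rewrite (MI_symE option_negbK (@BEC_sym e) (BEC_ge0 he) is_distr_unif).
rewrite /negentropy !sum_option_bool !outdE /BEC /unif /=.
rewrite (_ : 1 / 2 * e + 1 / 2 * e = e); last by field.
rewrite (_ : 1 / 2 * (1 - e) + 1 / 2 * 0 = (1 - e) / 2); last by field.
rewrite (_ : 1 / 2 * 0 + 1 / 2 * (1 - e) = (1 - e) / 2); last by field.
rewrite !plogq1 !mul0r; case/andP: he => e0 e1.
case: (eqVneq (1 - e) 0) => [->|ne0]; first by rewrite !mul0r; ring.
have e_lt1 : 0 < 1 - e by rewrite lt_def ne0 subr_ge0.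
by rewrite ln_div ?posrE //; field; exact: ln2_neq0.
Qed.

Lemma KL_BEC_unif e p : 0 <= e <= 1 -> 0 <= p <= 1 ->
  KL (outd (BEC e) (bern p)) (outd (BEC e) unif) = (1 - e) * dbin p (1 / 2).
Proof.
case/andP=> e0 e1 hp.
rewrite /KL sum_option_bool !outdE /BEC /unif /bern /=.
rewrite (_ : p * e + (1 - p) * e = 1 / 2 * e + 1 / 2 * e); last by field.
rewrite plogqxx add0r.
rewrite (_ : p * (1 - e) + (1 - p) * 0 = (1 - e) * p); last by ring.
rewrite (_ : 1 / 2 * (1 - e) + 1 / 2 * 0 = (1 - e) * (1 / 2)); last by ring.
rewrite (_ : p * 0 + (1 - p) * (1 - e) = (1 - e) * (1 - p)); last by ring.
rewrite (_ : 1 / 2 * 0 + 1 / 2 * (1 - e) = (1 - e) * (1 / 2)); last by ring.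
rewrite !plogqMl ?subr_ge0 // /dbin (_ : 1 - 1 / 2 = 1 / 2); last by field.
ring.
Qed.

Lemma BSC_sym d y : BSC d false y = BSC d true (~~ y).
Proof. by case: y. Qed.

Lemma BSC_ge0 d : 0 <= d <= 1 -> forall x y, 0 <= BSC d x y.
Proof. by case/andP=> d0 d1 [] []; rewrite /BSC /= ?subr_ge0. Qed.

Lemma MI_unif_BSC d : 0 <= d <= 1 -> MI unif (BSC d) = 1 - h2 d.
Proof.
move=> hd; rewrite (MI_symE negbK (@BSC_sym d) (BSC_ge0 hd) is_distr_unif).
rewrite /negentropy !big_bool !outdE /BSC /unif /h2 /=.
rewrite (_ : 1 / 2 * (1 - d) + 1 / 2 * d = 1 / 2); last by field.
rewrite (_ : 1 / 2 * d + 1 / 2 * (1 - d) = 1 / 2); last by field.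
by rewrite !plogq1 ln_div ?posrE // ln1 sub0r; field; exact: ln2_neq0.
Qed.

Lemma KL_BSC_unif d p :
  KL (outd (BSC d) (bern p)) (outd (BSC d) unif) = dbin (bsc_out (1 - 2 * d) p) (1 / 2).
Proof.
rewrite /KL big_bool !outdE /BSC /unif /bern /dbin /=.
rewrite (_ : p * (1 - d) + (1 - p) * d = bsc_out (1 - 2 * d) p); last by rewrite /bsc_out; field.
rewrite (_ : p * d + (1 - p) * (1 - d) = 1 - bsc_out (1 - 2 * d) p); last by rewrite /bsc_out; field.
rewrite (_ : 1 / 2 * (1 - d) + 1 / 2 * d = 1 / 2); last by field.
by rewrite (_ : 1 / 2 * d + 1 / 2 * (1 - d) = 1 - 1 / 2) //; field.
Qed.

End Channels.

Theorem mainTheorem10 (R : realType) (l : nat) (W : bool -> 'I_(2 * l + 1) -> R) :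
  (1 <= l)%N -> is_BISO W ->
  secrecy_capacity (BEC (1 - etaKL W)) W = etaKL W - capacity W /\
  secrecy_capacity W (BSC ((1 - Num.sqrt (etaKL W)) / 2)) =
    capacity W - 1 + h2 ((1 - Num.sqrt (etaKL W)) / 2).
Proof.
move=> _ hW; have W_sym := W_sym hW; have W_ge0 := W_ge0 hW.
have e0 := etaKL_ge0 hW; have e1 := etaKL_le1 hW.
have e01 : 0 <= 1 - etaKL W <= 1 by apply/andP; split; lra.
set s := Num.sqrt (etaKL W).
have s2 : s ^+ 2 = etaKL W by rewrite sqr_sqrtr.
have s01 : 0 <= s <= 1 by rewrite sqrtr_ge0 -sqrtr1 ler_sqrt.
have d01 : 0 <= (1 - s) / 2 <= 1 by case/andP: s01 => ? ?; apply/andP; split; lra.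
rewrite (capacityW hW); split.
  rewrite (secrecy_capacity_unif option_negbK (@BEC_sym _ _) (@rev_ordK _) W_sym
    (BEC_ge0 e01) W_ge0) ?MI_unif_BEC //; first by ring.
  move=> p hp; rewrite KL_BEC_unif // (_ : 1 - (1 - etaKL W) = etaKL W); last by ring.
  exact: KL_outW_unif_le.
rewrite (secrecy_capacity_unif (@rev_ordK _) W_sym negbK (@BSC_sym _ _) W_ge0
  (BSC_ge0 d01)) ?MI_unif_BSC //; first by ring.
move=> p hp; rewrite KL_BSC_unif (_ : 1 - 2 * ((1 - s) / 2) = s); last by field.
apply: KL_bsc_le_outW => //; first by case/andP: s01 => ? ?; apply/andP; split; lra.
by rewrite s2; exact: etaKL_le_chi2W.
Qed.
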